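(* Let $m,n\geq 2$ be integers with $m\mid n$. Let $E_n=(A^{(n)}\#C_n)/(e_0)$ and $E_m=(A^{(m)}\#C_m)/(e_0)$. Then $\operatorname{GKdim}E_n\geq\operatorname{GKdim}E_m$; equivalently $n-\mathrm{p}(A^{(n)},C_n)\geq m-\mathrm{p}(A^{(m)},C_m)$.
   Context: $\Bbbk$ is an algebraically closed field of characteristic zero. For $k\ge2$, $A^{(k)}=\Bbbk_{-1}[x_0,\dots,x_{k-1}]$ is the algebra generated by degree-one $x_0,\dots,x_{k-1}$ with $x_ix_j=-x_jx_i$ ($i\ne j$), with the cyclic group $C_k=\langle\sigma\rangle$ acting by $\sigma(x_i)=x_{i+1}$ (indices in $\mathbb{Z}_k$). In the skew group algebra $A^{(k)}\#C_k$, $e_0=1\#\frac1k\sum_{g\in C_k}g$ and $(e_0)$ is the two-sided ideal it generates; $\mathrm{p}(A^{(k)},C_k)=k-\operatorname{GKdim}\big((A^{(k)}\#C_k)/(e_0)\big)$. *)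

From HB Require Import structures.
From mathcomp Require Import all_boot all_order all_algebra.
Set Implicit Arguments. Unset Strict Implicit. Unset Printing Implicit Defensive.
Import GRing.Theory.
Local Open Scope ring_scope.

(* The algebra E_k = (A^(k) # C_k)/(e_0) is realised by its presentation as a
   quotient of the free associative K-algebra K<x_0,...,x_{k-1}, s>
   (s = 1#sigma) by the two-sided ideal generated by
     x_i x_j + x_j x_i (i <> j)        [relations of A^(k) = K_{-1}[x]]
     s^k - 1                            [C_k = <sigma>, sigma^k = 1]
     s x_i - x_{i+1} s                  [(1#sigma)(x_i#1) = sigma(x_i)#sigma]
     e_0 = (1/k) sum_{j<k} s^j          [the idempotent e_0]
   Elements of the free algebra are formal finite sums: lists of
   (coefficient, word); two formal sums denote the same element iff all
   word-coefficients agree (fequiv). *)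

Section FreeAlg.
Variable K : fieldType.
Variable k : nat.

Definition letter := option 'I_k.          (* Some i = x_i, None = s *)
Definition word := seq letter.
Definition falg := seq (K * word).

Definition fcoef (f : falg) (w : word) : K := \sum_(p <- f | p.2 == w) p.1.
Definition fequiv (f g : falg) : Prop := forall w, fcoef f w = fcoef g w.

Definition fadd (f g : falg) : falg := f ++ g.
Definition fscale (c : K) (f : falg) : falg := [seq (c * p.1, p.2) | p <- f].
Definition fsub (f g : falg) : falg := fadd f (fscale (-1) g).
Definition fmul (f g : falg) : falg :=
  [seq (p.1 * q.1, p.2 ++ q.2) | p <- f, q <- g].
Definition fsum (fs : seq falg) : falg := flatten fs.
Definition fword (w : word) : falg := [:: (1, w)].
Definition fone : falg := fword [::].
Definition gen_x (i : 'I_k) : falg := fword [:: Some i].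
Definition gen_s : falg := fword [:: None].

Definition anticomm_rels : seq falg :=
  [seq fadd (fmul (gen_x ij.1) (gen_x ij.2)) (fmul (gen_x ij.2) (gen_x ij.1))
  | ij <- [seq (i, j) | i <- enum 'I_k, j <- enum 'I_k] & ij.1 != ij.2].
Definition group_rel : falg := fsub (fword (nseq k None)) fone.
Definition conj_rels : seq falg :=
  [seq fsub (fmul gen_s (gen_x i)) (fmul (gen_x (ordS i)) gen_s) | i <- enum 'I_k].
Definition skew_rels : seq falg := group_rel :: anticomm_rels ++ conj_rels.

Definition e0 : falg :=
  fscale (k%:R^-1) (fsum [seq fword (nseq j None) | j <- iota 0 k]).

Definition E_rels : seq falg := e0 :: skew_rels.

Definition in_ideal (rels : seq falg) (f : falg) : Prop :=
  exists ts : seq (falg * falg * falg),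
    all (fun t => t.1.2 \in rels) ts /\
    fequiv f (fsum [seq fmul (fmul t.1.1 t.1.2) t.2 | t <- ts]).

(* f in V^N, where V = span(1, x_0, ..., x_{k-1}, s) is the standard
   finite-dimensional generating subspace *)
Definition in_VN (N : nat) (f : falg) : bool := all (fun p => size p.2 <= N)%N f.

Definition dim_ge (N d : nat) : Prop :=
  exists fs : 'I_d -> falg, (forall i, in_VN N (fs i)) /\
    forall c : 'I_d -> K,
      in_ideal E_rels (fsum [seq fscale (c i) (fs i) | i <- enum 'I_d]) ->
      forall i, c i = 0.

(* "d_N <= N^(p/q) for all large N", with d_N = dim(image of V^N in E_k) *)
Definition gk_bound (p q : nat) : Prop :=
  exists N0, forall N, (N0 <= N)%N -> forall d, dim_ge N d -> (d ^ q <= N ^ p)%N.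

End FreeAlg.

(* GKdim E = limsup log d_N / log N = inf { r >= 0 : d_N <= N^r eventually },
   the inf being taken (equivalently) over nonnegative rationals r = p/q.
   gk_le K m n  :<->  GKdim E_m <= GKdim E_n  (inf of the bound sets, with
   inf of the empty set = +infinity): every rational strictly above a bound
   for E_n is a bound for E_m. *)
Definition gk_le (K : fieldType) (m n : nat) : Prop :=
  forall p q, (0 < q)%N -> gk_bound K n p q ->
  forall p' q', (0 < q')%N -> (p * q' < p' * q)%N -> gk_bound K m p' q'.

(* Write n = r m.  Sending x_i to x_(i %/ r) in the diagonal slot i %% r, and
   s to the r x r matrix with ones at the positions (b, b - 1) and s at
   (0, r - 1), defines a representation rho of the free algebra on
   x_0, ..., x_(n-1), s by r x r matrices over the free algebra on
   x_0, ..., x_(m-1), s.  It maps every defining relation of E_n to a matrix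
   with entries in the defining ideal of E_m; for e_0 this needs m to be
   invertible in K.  Conversely x_a |-> x_(a r), s |-> s^r multiplies word
   lengths by at most r and is inverted by the (0, 0) entry of rho.  So
   elements of V^N that are linearly independent in E_m lift to elements of
   V^(rN) that are linearly independent in E_n, whence d_N(E_m) <= d_(rN)(E_n)
   and GKdim E_m <= GKdim E_n. *)

From HB Require Import structures.
From mathcomp Require Import all_boot all_order all_algebra all_field.
From mathcomp Require Import zify.
Set Implicit Arguments. Unset Strict Implicit. Unset Printing Implicit Defensive.
Import GRing.Theory.
Local Open Scope ring_scope.

Lemma sum_eq_if_seq (V : nmodType) (T : eqType) (s : seq T) (x : T) (F : T -> V) :
  uniq s -> x \in s -> \sum_(y <- s) (if x == y then F y else 0) = F x.
Proof.
move=> us xs; rewrite (bigD1_seq x) //= eqxx big1 ?addr0 // => y.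
by rewrite eq_sym => /negPf->.
Qed.

Lemma sum_iota_mul (V : nmodType) (F : nat -> V) r M :
  \sum_(j <- iota 0 (r * M)) F j =
  \sum_(a <- iota 0 M) \sum_(c <- iota 0 r) F (a * r + c)%N.
Proof.
elim: M => [|M IH]; first by rewrite muln0 !big_nil.
rewrite mulnS addnC iotaD big_cat IH -addn1 iotaD big_cat big_seq1 /=.
congr (_ + _); rewrite !add0n -{1}(addn0 (r * M)%N) iotaDl big_map.
by apply: eq_bigr => c _; rewrite mulnC.
Qed.

Section FormalSums.
Variables (K : fieldType) (k : nat).
Implicit Types (f g h : falg K k) (F : word k -> K).

Definition feval F f : K := \sum_(p <- f) p.1 * F p.2.

Lemma eq_feval F F' f : F =1 F' -> feval F f = feval F' f.
Proof. by move=> eFF'; apply: eq_bigr => p _; rewrite eFF'. Qed.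

Lemma feval_nil F : feval F [::] = 0.
Proof. exact: big_nil. Qed.

Lemma feval_cat F f g : feval F (f ++ g) = feval F f + feval F g.
Proof. exact: big_cat. Qed.

Lemma feval_scale F c f : feval F (fscale c f) = c * feval F f.
Proof. by rewrite /feval big_map mulr_sumr; apply: eq_bigr => p _; rewrite mulrA. Qed.

Lemma feval_sub F f g : feval F (fsub f g) = feval F f - feval F g.
Proof. by rewrite feval_cat feval_scale mulN1r. Qed.

Lemma feval_mul F f g :
  feval F (fmul f g) = feval (fun u => feval (fun v => F (u ++ v)) g) f.
Proof.
rewrite /feval /fmul big_allpairs_dep; apply: eq_bigr => p _.
by rewrite mulr_sumr; apply: eq_bigr => q _; rewrite mulrA.
Qed.

Lemma feval_fsum F fs : feval F (fsum fs) = \sum_(f <- fs) feval F f.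
Proof.
elim: fs => [|f fs IH]; first by rewrite feval_nil big_nil.
by rewrite big_cons -IH -feval_cat.
Qed.

Lemma feval_word F w : feval F (fword K w) = F w.
Proof. by rewrite /feval big_seq1 mul1r. Qed.

Lemma feval_weight0 f : feval (fun=> 0) f = 0.
Proof. by rewrite /feval big1 // => p _; rewrite mulr0. Qed.

Lemma feval_weight_sum (I : Type) (s : seq I) (F : I -> word k -> K) f :
  feval (fun w => \sum_(i <- s) F i w) f = \sum_(i <- s) feval (F i) f.
Proof. by rewrite /feval exchange_big; apply: eq_bigr => p _; rewrite mulr_sumr. Qed.

Lemma feval_mulA F f g h :
  feval F (fmul (fmul f g) h) = feval F (fmul f (fmul g h)).
Proof.
rewrite !feval_mul; apply: eq_feval => u; rewrite feval_mul.
by apply: eq_feval => v; apply: eq_feval => w; rewrite catA.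
Qed.

Lemma fcoef_feval f w : fcoef f w = feval (fun v => (v == w)%:R) f.
Proof.
rewrite /fcoef /feval big_mkcond; apply: eq_bigr => p _ /=.
by case: eqP; rewrite ?mulr1 ?mulr0.
Qed.

Lemma feval_fcoef F f (ws : seq (word k)) : uniq ws ->
  {subset [seq p.2 | p <- f] <= ws} -> feval F f = \sum_(w <- ws) fcoef f w * F w.
Proof.
move=> uws; elim: f => [_|p f IH sub].
  by rewrite feval_nil big1 // => w _; rewrite /fcoef big_nil mul0r.
rewrite /feval big_cons -/(feval F f) IH => [|w wf]; last first.
  by apply: sub; rewrite inE wf orbT.
have pws : p.2 \in ws by apply: sub; rewrite inE eqxx.
rewrite -(sum_eq_if_seq (fun w => p.1 * F w) uws pws) -big_split /=.
by apply: eq_bigr => w _; rewrite /fcoef big_cons; case: ifP; rewrite ?mulrDl ?add0r.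
Qed.

Lemma fequivP f g : fequiv f g <-> forall F, feval F f = feval F g.
Proof.
split=> [eqfg F|eqfg w]; last by rewrite !fcoef_feval eqfg.
set ws := undup [seq p.2 | p <- f ++ g].
have [sub_f sub_g] : {subset [seq p.2 | p <- f] <= ws} /\
                     {subset [seq p.2 | p <- g] <= ws}.
  by split=> w; rewrite mem_undup map_cat mem_cat => ->; rewrite ?orbT.
rewrite (feval_fcoef F (undup_uniq _) sub_f) (feval_fcoef F (undup_uniq _) sub_g).
by apply: eq_bigr => w _; rewrite eqfg.
Qed.

Variable rels : seq (falg K k).

Lemma in_idealP f : in_ideal rels f <->
  exists ts : seq (falg K k * falg K k * falg K k),
    all (fun t => t.1.2 \in rels) ts /\
    forall F, feval F f = \sum_(t <- ts) feval F (fmul (fmul t.1.1 t.1.2) t.2).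
Proof.
split=> -[ts [rels_ts eqf]]; exists ts; split => //.
  by move=> F; move/fequivP: eqf => ->; rewrite feval_fsum big_map.
by apply/fequivP => F; rewrite eqf feval_fsum big_map.
Qed.

Lemma in_ideal_fequiv f g : fequiv f g -> in_ideal rels g -> in_ideal rels f.
Proof.
by move=> efg [ts [rels_ts eqg]]; exists ts; split=> // w; rewrite efg eqg.
Qed.

Lemma in_ideal0 : in_ideal rels [::].
Proof. by exists [::]. Qed.

Lemma in_ideal_cat f g : in_ideal rels f -> in_ideal rels g -> in_ideal rels (f ++ g).
Proof.
move=> /in_idealP[ts [rts eqf]] /in_idealP[ts' [rts' eqg]].
apply/in_idealP; exists (ts ++ ts'); split; first by rewrite all_cat rts rts'.
by move=> F; rewrite feval_cat eqf eqg big_cat.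
Qed.

Lemma in_ideal_fsum fs :
  (forall f, f \in fs -> in_ideal rels f) -> in_ideal rels (fsum fs).
Proof.
elim: fs => [_|f fs IH ideal_fs]; first exact: in_ideal0.
apply: in_ideal_cat; first by apply: ideal_fs; rewrite inE eqxx.
by apply: IH => g gfs; apply: ideal_fs; rewrite inE gfs orbT.
Qed.

Lemma in_ideal_scale c f : in_ideal rels f -> in_ideal rels (fscale c f).
Proof.
move=> /in_idealP[ts [rts eqf]]; apply/in_idealP.
exists [seq (fscale c t.1.1, t.1.2, t.2) | t <- ts]; split; first by rewrite all_map.
move=> F; rewrite feval_scale eqf big_map mulr_sumr.
by apply: eq_bigr => t _; rewrite /= !feval_mul feval_scale.
Qed.

Lemma in_ideal_mull h f : in_ideal rels f -> in_ideal rels (fmul h f).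
Proof.
move=> /in_idealP[ts [rts eqf]]; apply/in_idealP.
exists [seq (fmul h t.1.1, t.1.2, t.2) | t <- ts]; split; first by rewrite all_map.
move=> F; rewrite feval_mul (eq_feval _ (fun u => eqf _)) feval_weight_sum big_map.
apply: eq_bigr => t _; rewrite -feval_mul /= !feval_mulA [LHS]feval_mul [RHS]feval_mul.
by apply: eq_feval => u; apply: feval_mulA.
Qed.

Lemma in_ideal_mulr h f : in_ideal rels f -> in_ideal rels (fmul f h).
Proof.
move=> /in_idealP[ts [rts eqf]]; apply/in_idealP.
exists [seq (t.1.1, t.1.2, fmul t.2 h) | t <- ts]; split; first by rewrite all_map.
move=> F; rewrite feval_mul eqf big_map.
by apply: eq_bigr => t _; rewrite -feval_mul /= feval_mulA.
Qed.

Lemma in_ideal_rel r : r \in rels -> in_ideal rels r.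
Proof.
move=> r_rels; apply/in_idealP; exists [:: (fone K k, r, fone K k)].
split; first by rewrite /= r_rels.
move=> F; rewrite big_seq1 /= !feval_mul feval_word.
by apply: eq_feval => w; rewrite feval_word cats0.
Qed.

End FormalSums.

Section Relations.
Variables (K : fieldType) (k : nat).
Implicit Types (F : word k -> K) (i j : 'I_k).

Definition anticomm_rel i j : falg K k :=
  fadd (fmul (gen_x K i) (gen_x K j)) (fmul (gen_x K j) (gen_x K i)).
Definition conj_rel i : falg K k :=
  fsub (fmul (gen_s K k) (gen_x K i)) (fmul (gen_x K (ordS i)) (gen_s K k)).

Lemma E_relsP rel : rel \in E_rels K k ->
  [\/ rel = e0 K k, rel = group_rel K k,
      exists2 ij : 'I_k * 'I_k, ij.1 != ij.2 & rel = anticomm_rel ij.1 ij.2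
    | exists i, rel = conj_rel i].
Proof.
rewrite !inE mem_cat => /or3P[/eqP->|/eqP->|/orP[]]; [exact: Or41|exact: Or42| |].
  by case/mapP=> ij; rewrite mem_filter => /andP[ij12 _] ->; apply: Or43; exists ij.
by case/mapP=> i _ ->; apply: Or44; exists i.
Qed.

Lemma e0_in_E_rels : e0 K k \in E_rels K k.
Proof. by rewrite inE eqxx. Qed.

Lemma group_rel_in_E_rels : group_rel K k \in E_rels K k.
Proof. by rewrite !inE eqxx orbT. Qed.

Lemma anticomm_rel_in_E_rels i j : i != j -> anticomm_rel i j \in E_rels K k.
Proof.
move=> ij; rewrite !inE mem_cat; apply/or3P/Or33/orP; left.
apply/mapP; exists (i, j) => //; rewrite mem_filter ij.
by apply/allpairsP; exists (i, j); rewrite !mem_enum.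
Qed.

Lemma conj_rel_in_E_rels i : conj_rel i \in E_rels K k.
Proof.
rewrite !inE mem_cat; apply/or3P/Or33/orP; right.
by apply/mapP; exists i; rewrite ?mem_enum.
Qed.

Lemma feval_e0 F :
  feval F (e0 K k) = k%:R^-1 * \sum_(a <- iota 0 k) F (nseq a None).
Proof.
rewrite feval_scale feval_fsum big_map.
by congr (_ * _); apply: eq_bigr => a _; rewrite feval_word.
Qed.

Lemma feval_group_rel F : feval F (group_rel K k) = F (nseq k None) - F [::].
Proof. by rewrite feval_sub !feval_word. Qed.

Lemma feval_anticomm_rel F i j :
  feval F (anticomm_rel i j) = F [:: Some i; Some j] + F [:: Some j; Some i].
Proof. by rewrite feval_cat !feval_mul !feval_word. Qed.

Lemma feval_conj_rel F i :
  feval F (conj_rel i) = F [:: None; Some i] - F [:: Some (ordS i); None].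
Proof. by rewrite feval_sub !feval_mul !feval_word. Qed.

End Relations.

Section BlockRepresentation.
Variables (K : fieldType) (m r : nat).
Hypothesis r_gt0 : (0 < r)%N.
Local Notation n := (r * m)%N.
Implicit Types (F : word m -> K) (f g h : falg K n) (w : word n).

Lemma quot_lt (i : 'I_n) : (i %/ r < m)%N.
Proof. by rewrite ltn_divLR // (mulnC m r). Qed.

Definition xquot (i : 'I_n) : 'I_m := Ordinal (quot_lt i).

(* Row b of the image of a word under rho has at most one nonzero entry, itself
   a word: [rho_run b w] returns its column and that word, [None] if the row
   is zero. *)
Definition rho_step (b : nat) (l : letter n) : option (nat * word m) :=
  match l with
  | Some i => if (i %% r == b)%N then Some (b, [:: Some (xquot i)]) else None
  | None => if b is b1.+1 then Some (b1, [::]) else Some (r.-1, [:: None])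
  end.

Fixpoint rho_run (b : nat) w : option (nat * word m) :=
  if w is l :: w' then
    if rho_step b l is Some (b1, u1) then
      if rho_run b1 w' is Some (b2, u2) then Some (b2, u1 ++ u2) else None
    else None
  else Some (b, [::]).

Definition rho_weight (b b' : nat) F w : K :=
  if rho_run b w is Some (b2, u) then (if b2 == b' then F u else 0) else 0.

Definition rho_entry (b b' : nat) f : falg K m :=
  [seq (p.1, u) | p <- f, u <- if rho_run b p.2 is Some (b2, u) then
                                 if b2 == b' then [:: u] else [::] else [::]].

Lemma feval_rho_entry F b b' f :
  feval F (rho_entry b b' f) = feval (rho_weight b b' F) f.
Proof.
rewrite /feval /rho_entry big_allpairs_dep; apply: eq_bigr => p _ /=.
rewrite /rho_weight; case: (rho_run b p.2) => [[b2 u]|]; last by rewrite big_nil mulr0.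
by case: eqP; rewrite ?big_seq1 ?big_nil ?mulr0.
Qed.

Lemma eq_rho_weight b b' F F' w : F =1 F' -> rho_weight b b' F w = rho_weight b b' F' w.
Proof.
by move=> eFF'; rewrite /rho_weight; case: (rho_run b w) => [[b2 u]|]; rewrite ?eFF'.
Qed.

Lemma rho_run_lt b w b2 u : (b < r)%N -> rho_run b w = Some (b2, u) -> (b2 < r)%N.
Proof.
have step_lt b0 l b1 u1 : (b0 < r)%N -> rho_step b0 l = Some (b1, u1) -> (b1 < r)%N.
  case: l => [i|] /=; first by case: eqP => // _ lt [<-].
  by case: b0 => [|b0] lt [<- _]; [rewrite prednK | apply: ltnW].
elim: w b b2 u => [|l w IH] b b2 u lt /=; first by case=> <-.
case E: (rho_step b l) => [[b1 u1]|] //.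
case E2: (rho_run b1 w) => [[b3 u3]|] // [<- _].
exact: IH (step_lt _ _ _ _ lt E) E2.
Qed.

Lemma rho_run_cat b w w' : rho_run b (w ++ w') =
  if rho_run b w is Some (b1, u1) then
    if rho_run b1 w' is Some (b2, u2) then Some (b2, u1 ++ u2) else None
  else None.
Proof.
elim: w b => [|l w IH] b /=; first by case: (rho_run b w') => [[]|].
case: (rho_step b l) => [[b1 u1]|] //; rewrite IH.
case: (rho_run b1 w) => [[b2 u2]|] //; case: (rho_run b2 w') => [[b3 u3]|] //.
by rewrite catA.
Qed.

Lemma rho_weight_cat b b' F w w' b1 u1 : rho_run b w = Some (b1, u1) ->
  rho_weight b b' F (w ++ w') = rho_weight b1 b' (fun u => F (u1 ++ u)) w'.
Proof.
by move=> E; rewrite /rho_weight rho_run_cat E; case: (rho_run b1 w') => [[]|].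
Qed.

Lemma rho_weight_cat0 b b' F w w' : rho_run b w = None ->
  rho_weight b b' F (w ++ w') = 0.
Proof. by move=> E; rewrite /rho_weight rho_run_cat E. Qed.

Lemma rho_entry_mul b b'' f g : (b < r)%N ->
  fequiv (rho_entry b b'' (fmul f g))
         (fsum [seq fmul (rho_entry b b' f) (rho_entry b' b'' g) | b' <- iota 0 r]).
Proof.
move=> lt; apply/fequivP => F; rewrite feval_rho_entry feval_fsum big_map.
under [RHS]eq_bigr => b' _ do
  rewrite feval_mul feval_rho_entry (eq_feval _ (fun w => eq_rho_weight _ _ w
    (fun u => feval_rho_entry (fun v => F (u ++ v)) b' b'' g))).
rewrite -feval_weight_sum feval_mul; apply: eq_feval => w.
case E: (rho_run b w) => [[b1 u1]|]; last first.
  rewrite (eq_feval _ (fun w' => rho_weight_cat0 b'' F w' E)) feval_weight0.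
  by rewrite big1 // => b' _; rewrite /rho_weight E.
rewrite (eq_feval _ (fun w' => rho_weight_cat b'' F w' E)) /rho_weight E.
rewrite (sum_eq_if_seq
  (fun b' => feval (rho_weight b' b'' (fun v => F (u1 ++ v))) g)) //.
  exact: iota_uniq.
by rewrite mem_iota add0n (rho_run_lt lt E).
Qed.


Definition rho_ideal f :=
  forall b b', (b < r)%N -> in_ideal (E_rels K m) (rho_entry b b' f).

Lemma rho_ideal_fequiv f g : fequiv f g -> rho_ideal g -> rho_ideal f.
Proof.
move=> /fequivP efg ideal_g b b' lt; apply: in_ideal_fequiv (ideal_g b b' lt).
by apply/fequivP => F; rewrite !feval_rho_entry efg.
Qed.

Lemma rho_ideal_fsum fs : (forall f, f \in fs -> rho_ideal f) -> rho_ideal (fsum fs).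
Proof.
move=> ideal_fs b b' lt.
apply: (@in_ideal_fequiv _ _ _ _ (fsum [seq rho_entry b b' f | f <- fs])).
  apply/fequivP => F; rewrite feval_rho_entry !feval_fsum big_map.
  by apply: eq_bigr => f _; rewrite feval_rho_entry.
by apply: in_ideal_fsum => _ /mapP[f ffs ->]; apply: ideal_fs.
Qed.

Lemma rho_ideal_mull h f : rho_ideal f -> rho_ideal (fmul h f).
Proof.
move=> ideal_f b b' lt; apply: (in_ideal_fequiv (rho_entry_mul _ _ _ lt)).
apply: in_ideal_fsum => _ /mapP[b1 b1r ->]; apply/in_ideal_mull/ideal_f.
by move: b1r; rewrite mem_iota.
Qed.

Lemma rho_ideal_mulr h f : rho_ideal f -> rho_ideal (fmul f h).
Proof.
move=> ideal_f b b' lt; apply: (in_ideal_fequiv (rho_entry_mul _ _ _ lt)).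
by apply: in_ideal_fsum => _ /mapP[b1 _ ->]; apply/in_ideal_mulr/ideal_f.
Qed.

Lemma rho_ideal_in_ideal (rels : seq (falg K n)) f :
  (forall rel, rel \in rels -> rho_ideal rel) -> in_ideal rels f -> rho_ideal f.
Proof.
move=> ideal_rels [ts [rels_ts eqf]]; apply: (rho_ideal_fequiv eqf).
apply: rho_ideal_fsum => _ /mapP[t tts ->].
exact/rho_ideal_mulr/rho_ideal_mull/ideal_rels/(allP rels_ts).
Qed.

Lemma rho_entry_ideal0 b b' f :
  (forall F, feval (rho_weight b b' F) f = 0) ->
  in_ideal (E_rels K m) (rho_entry b b' f).
Proof.
move=> rho_f0; apply: (in_ideal_fequiv _ (in_ideal0 _)).
by apply/fequivP => F; rewrite feval_rho_entry rho_f0 feval_nil.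
Qed.

Lemma rho_run_nseq_le j b : (j <= b)%N ->
  rho_run b (nseq j None) = Some ((b - j)%N, [::]).
Proof.
elim: j b => [|j IH] b le /=; first by rewrite subn0.
by case: b le => [//|b] le /=; rewrite IH.
Qed.

Lemma rho_run_nseq_mul a b : (b < r)%N ->
  rho_run b (nseq (a * r) None) = Some (b, nseq a None).
Proof.
move=> lt; have run_sr : rho_run b (nseq r None) = Some (b, [:: None]).
  have -> : nseq r (None : letter n) = nseq b None ++ nseq (r - b.+1).+1 None.
    by rewrite -nseqD subnSK // subnKC // ltnW.
  rewrite rho_run_cat rho_run_nseq_le // subnn /= rho_run_nseq_le; last by lia.
  by congr (Some (_, _)); lia.
elim: a => [|a IH]; first by rewrite mul0n.
by rewrite mulSn nseqD rho_run_cat run_sr IH.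
Qed.

Lemma rho_ideal_group_rel : rho_ideal (group_rel K n).
Proof.
move=> b b' lt.
have run_sn : rho_run b (nseq n None) = Some (b, nseq m None).
  by rewrite (congr1 (fun k => nseq k None) (mulnC r m)) rho_run_nseq_mul.
have [<-|ne] := eqVneq b b'.
  apply: (in_ideal_fequiv _ (in_ideal_rel (group_rel_in_E_rels K m))).
  apply/fequivP => F.
  by rewrite feval_rho_entry !feval_group_rel /rho_weight run_sn /= eqxx.
apply: rho_entry_ideal0 => F.
by rewrite feval_group_rel /rho_weight run_sn /= (negPf ne) subrr.
Qed.

Lemma xquot_inj (i j : 'I_n) : (i %% r = j %% r)%N -> xquot i = xquot j -> i = j.
Proof.
move=> eq_mod /(congr1 val) /= eq_quot.
by apply: val_inj; rewrite /= (divn_eq i r) (divn_eq j r) eq_mod eq_quot.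
Qed.

Lemma rho_weight_xx b b' F (i j : 'I_n) : rho_weight b b' F [:: Some i; Some j] =
  if [&& i %% r == b, j %% r == b & b == b']%N
  then F [:: Some (xquot i); Some (xquot j)] else 0.
Proof. by rewrite /rho_weight /=; case: eqP; case: eqP. Qed.

Lemma rho_ideal_anticomm_rel (i j : 'I_n) : i != j -> rho_ideal (anticomm_rel K i j).
Proof.
move=> ij b b' lt.
have [/and3P[/eqP ib /eqP jb /eqP bb']|cond] :=
  boolP [&& i %% r == b, j %% r == b & b == b']%N.
  have qij : xquot i != xquot j.
    by apply: contra ij => /eqP eq_quot; apply/eqP/xquot_inj; rewrite ?ib ?jb.
  apply: (in_ideal_fequiv _ (in_ideal_rel (anticomm_rel_in_E_rels K qij))).
  apply/fequivP => F; rewrite feval_rho_entry !feval_anticomm_rel !rho_weight_xx.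
  by rewrite ib jb bb' eqxx.
have cond' : ~~ [&& j %% r == b, i %% r == b & b == b']%N by rewrite andbCA.
apply: rho_entry_ideal0 => F.
by rewrite feval_anticomm_rel !rho_weight_xx (negPf cond) (negPf cond') addr0.
Qed.

Lemma ordS_mod (i : 'I_n) : (ordS i %% r = (i %% r).+1 %% r)%N.
Proof. by rewrite /= modn_dvdm ?dvdn_mulr // -[(i %% r).+1]addn1 modnDml addn1. Qed.

Lemma xquot_ordS (i : 'I_n) : ((i %% r).+1 < r)%N -> xquot (ordS i) = xquot i.
Proof.
move=> lt; apply: val_inj; rewrite /= [in i.+1](divn_eq i r) -addnS.
have q_lt : ((i %/ r).+1 * r <= r * m)%N by rewrite mulnC leq_pmul2l // quot_lt.
rewrite modn_small; last by rewrite mulSn in q_lt; lia.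
by rewrite divnMDl // (divn_small lt) addn0.
Qed.

Lemma xquot_ordS_last (i : 'I_n) : (i %% r).+1 = r -> xquot (ordS i) = ordS (xquot i).
Proof.
move=> last; apply: val_inj; rewrite /= [in i.+1](divn_eq i r) -addnS last.
by rewrite addnC -mulSn [X in (_ %% X)%N](mulnC r m) -muln_modl // mulnK.
Qed.

Lemma rho_weight_sx b b' F (i : 'I_n) : rho_weight b b' F [:: None; Some i] =
  if b is b1.+1 then
    if (i %% r == b1)%N && (b1 == b') then F [:: Some (xquot i)] else 0
  else if (i %% r == r.-1)%N && (r.-1 == b') then F [:: None; Some (xquot i)] else 0.
Proof. by rewrite /rho_weight; case: b => [|b1] /=; case: eqP. Qed.

Lemma rho_weight_xs b b' F (i : 'I_n) : rho_weight b b' F [:: Some i; None] =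
  if (i %% r == b)%N then
    if b is b1.+1 then (if b1 == b' then F [:: Some (xquot i)] else 0)
    else if r.-1 == b' then F [:: Some (xquot i); None] else 0
  else 0.
Proof. by rewrite /rho_weight /=; case: eqP => // _; case: b. Qed.

Lemma feval_rho_conj_rel b b' F (i : 'I_n) : (b < r)%N ->
  feval (rho_weight b b' F) (conj_rel K i) =
  if [&& b == 0, (i %% r).+1 == r & r.-1 == b']%N
  then F [:: None; Some (xquot i)] - F [:: Some (ordS (xquot i)); None] else 0.
Proof.
move=> lt; rewrite feval_conj_rel rho_weight_sx rho_weight_xs ordS_mod.
have c_lt : (i %% r < r)%N by rewrite ltn_mod.
have [c_lt'|c_last] : ((i %% r).+1 < r)%N \/ (i %% r).+1 = r by lia.
  rewrite (modn_small c_lt') xquot_ordS // [(_ == r)%N]ltn_eqF // andbF.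
  case: b {lt} => [|b1]; last by rewrite eqSS; case: (_ == b1)%N; rewrite /= subrr.
  by rewrite [(_ == r.-1)%N](_ : _ = false) ?subrr //; apply/eqP; lia.
rewrite c_last modnn xquot_ordS_last // eqxx.
case: b lt => [|b1] lt.
  rewrite [(_ == r.-1)%N](_ : _ = true) /=; last by apply/eqP; lia.
  by case: eqP; rewrite ?subrr.
by rewrite [(_ == b1)%N](_ : _ = false) ?subrr //; apply/eqP; lia.
Qed.

Lemma rho_ideal_conj_rel (i : 'I_n) : rho_ideal (conj_rel K i).
Proof.
move=> b b' lt.
have [cond|/negPf cond] := boolP [&& b == 0, (i %% r).+1 == r & r.-1 == b']%N.
  apply: (in_ideal_fequiv _ (in_ideal_rel (conj_rel_in_E_rels K (xquot i)))).
  apply/fequivP => F.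
  by rewrite feval_rho_entry feval_rho_conj_rel // cond feval_conj_rel.
by apply: rho_entry_ideal0 => F; rewrite feval_rho_conj_rel // cond.
Qed.

Hypothesis m_neq0 : m%:R != 0 :> K.

(* Entrywise, e_0 of E_n is [m / n] times e_0 of E_m times the entries of
   1 + s + ... + s^(r-1). *)
Lemma rho_ideal_e0 : rho_ideal (e0 K n).
Proof.
move=> b b' lt.
pose X := fscale (n%:R^-1 * m%:R)
  (fsum [seq fmul (e0 K m) (rho_entry b b' (fword K (nseq c None))) | c <- iota 0 r]).
apply: (@in_ideal_fequiv _ _ _ _ X); last first.
  apply/in_ideal_scale/in_ideal_fsum => _ /mapP[c _ ->].
  exact/in_ideal_mulr/in_ideal_rel/e0_in_E_rels.
apply/fequivP => F; rewrite feval_rho_entry feval_e0 feval_scale feval_fsum big_map.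
rewrite sum_iota_mul -mulrA; congr (_ * _).
have split_pow a c : rho_weight b b' F (nseq (a * r + c) None) =
    rho_weight b b' (fun u => F (nseq a None ++ u)) (nseq c None).
  by rewrite nseqD (rho_weight_cat _ _ _ (rho_run_nseq_mul a lt)).
have corner c : feval F (fmul (e0 K m) (rho_entry b b' (fword K (nseq c None)))) =
    m%:R^-1 * \sum_(a <- iota 0 m)
                rho_weight b b' (fun u => F (nseq a None ++ u)) (nseq c None).
  rewrite feval_mul feval_e0; congr (_ * _).
  by apply: eq_bigr => a _; rewrite feval_rho_entry feval_word.
rewrite (eq_bigr _ (fun a _ => eq_bigr _ (fun c _ => split_pow a c))).
rewrite (eq_bigr _ (fun c _ => corner c)) -mulr_sumr mulrA divff // mul1r.
exact: exchange_big.
Qed.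

Lemma rho_ideal_E_rels rel : rel \in E_rels K n -> rho_ideal rel.
Proof.
case/E_relsP=> [->|->|[ij ij12 ->]|[i ->]].
- exact: rho_ideal_e0.
- exact: rho_ideal_group_rel.
- exact: rho_ideal_anticomm_rel.
- exact: rho_ideal_conj_rel.
Qed.

Lemma rho_ideal_in_E_ideal f : in_ideal (E_rels K n) f -> rho_ideal f.
Proof. exact/rho_ideal_in_ideal/rho_ideal_E_rels. Qed.

Lemma xlift_lt (a : 'I_m) : (a * r < n)%N.
Proof. by rewrite mulnC ltn_pmul2l. Qed.

Definition xlift (a : 'I_m) : 'I_n := Ordinal (xlift_lt a).

Definition stretch_letter (l : letter m) : word n :=
  if l is Some a then [:: Some (xlift a)] else nseq r None.

Definition stretch_word (u : word m) : word n := flatten (map stretch_letter u).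

Definition stretch (f : falg K m) : falg K n := [seq (p.1, stretch_word p.2) | p <- f].

Lemma rho_run_stretch u : rho_run 0 (stretch_word u) = Some (0%N, u).
Proof.
elim: u => [//|l u IH]; rewrite /stretch_word /= rho_run_cat -/(stretch_word u).
have -> : rho_run 0 (stretch_letter l) = Some (0%N, [:: l]).
  case: l => [a|] /=; last by rewrite -(rho_run_nseq_mul 1 r_gt0) mul1n.
  rewrite modnMl eqxx; congr (Some (_, [:: Some _])).
  by apply: val_inj; rewrite /= mulnK.
by rewrite IH.
Qed.

Lemma feval_rho_stretch F (f : falg K m) :
  feval (rho_weight 0 0 F) (stretch f) = feval F f.
Proof.
by rewrite /feval big_map; apply: eq_bigr => p _; rewrite /rho_weight rho_run_stretch.
Qed.

Lemma size_stretch_word u : (size (stretch_word u) <= r * size u)%N.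
Proof.
elim: u => [|l u IH] //; rewrite /stretch_word /= size_cat -/(stretch_word u).
by rewrite mulnS leq_add //; case: l => [a|] /=; rewrite ?size_nseq.
Qed.

Lemma in_VN_stretch N (f : falg K m) : in_VN N f -> in_VN (r * N) (stretch f).
Proof.
move=> /allP fN; apply/allP => _ /mapP[p pf ->] /=.
by apply: leq_trans (size_stretch_word _) _; rewrite leq_mul2l fN ?orbT.
Qed.

Lemma dim_ge_stretch N d : dim_ge K m N d -> dim_ge K n (r * N) d.
Proof.
move=> [fs [fsN indep]]; exists (fun i => stretch (fs i)).
split=> [i|c ideal_c]; first exact: in_VN_stretch.
apply: indep; move/rho_ideal_in_E_ideal/(_ 0%N 0%N r_gt0): ideal_c.
apply: in_ideal_fequiv.
apply/fequivP => F; rewrite feval_rho_entry !feval_fsum !big_map.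
by apply: eq_bigr => i _; rewrite !feval_scale feval_rho_stretch.
Qed.

End BlockRepresentation.

(* d^(q q') <= (r N)^(p q') = r^(p q') N^(p q') <= N^(p q' + 1) <= N^(p' q). *)
Lemma pow_bound_rescale d p q p' q' r N : (0 < q)%N -> (0 < q')%N ->
  (p * q' < p' * q)%N -> (0 < N)%N -> (r ^ (p * q') <= N)%N ->
  (d ^ q <= (r * N) ^ p)%N -> (d ^ q' <= N ^ p')%N.
Proof.
move=> q_gt0 q'_gt0 lt_pq N_gt0 r_le dq_le.
rewrite -(leq_exp2r _ _ q_gt0) -!expnM.
apply: (@leq_trans ((r * N) ^ (p * q'))).
  by rewrite mulnC expnM [X in (_ <= X)%N]expnM leq_exp2r.
apply: (@leq_trans (N ^ (p * q').+1)); last by rewrite leq_pexp2l // mulnC.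
by rewrite expnMn expnS leq_mul2r r_le orbT.
Qed.

Theorem lemma3p7 (K : closedFieldType) (charK0 : [pchar K] =i pred0)
  (m n : nat) (hm : (2 <= m)%N) (hn : (2 <= n)%N) (hmn : (m %| n)%N) :
  gk_le K m n.
Proof.
move=> p q q_gt0 [N0 bound_n] p' q' q'_gt0 lt_pq.
case/dvdnP: hmn hn bound_n => r -> hn bound_n.
have r_gt0 : (0 < r)%N by case: posnP hn => // ->.
have m_neq0 : m%:R != 0 :> K by move/pcharf0P: charK0 => ->; rewrite -lt0n; lia.
exists (maxn N0 (maxn 1 (r ^ (p * q')))) => N N_ge d.
move/(dim_ge_stretch r_gt0 m_neq0)/(bound_n (r * N)%N) => dim_rN.
apply: pow_bound_rescale (dim_rN _) => //; try lia.
by apply: leq_trans (leq_pmull N r_gt0); lia.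
Qed.
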